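(* There exist six hyperplanes $W_1,\dots,W_6\subset\mathbb R^4$ which do phase retrieval on $\mathbb R^4$, but such that the one-dimensional subspaces $\{W_i^\perp\}_{i=1}^6$ do not do phase retrieval on $\mathbb R^4$.
   Context: A hyperplane in $\mathbb R^4$ is a 3-dimensional subspace. A family of subspaces $\{W_i\}$ with orthogonal projections $P_i$ does phase retrieval if whenever $x,y\in\mathbb R^4$ satisfy $\|P_ix\|=\|P_iy\|$ for all $i$, then $x=\pm y$. *)

From HB Require Import structures.
From mathcomp Require Import all_boot all_order all_algebra.
From mathcomp Require Import reals.
Set Implicit Arguments. Unset Strict Implicit. Unset Printing Implicit Defensive.
Import Order.TTheory GRing.Theory Num.Theory.
Local Open Scope ring_scope.

(* Vectors of R^n are row vectors 'rV[R]_n with the standard inner product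
   <x, y> = x *m y^T.  A subspace of R^n is represented by a matrix whose
   ROW SPACE is that subspace (mxalgebra convention). *)

Section PR.
Variable R : rcfType.

Definition vnorm (n : nat) (x : 'rV[R]_n) : R := Num.sqrt (\sum_(i < n) x 0 i ^+ 2).

(* Matrix (acting on row vectors by right multiplication) of the orthogonal
   projection onto the row space of W:  P = B^T (B B^T)^{-1} B, where B is a
   basis (row_base) of the row space of W. *)
Definition orth_proj (m n : nat) (W : 'M[R]_(m, n)) : 'M[R]_n :=
  let B := row_base W in B^T *m invmx (B *m B^T) *m B.

Definition orth_compl (m n : nat) (W : 'M[R]_(m, n)) : 'M[R]_n := kermx W^T.

Definition does_phase_retrieval (I : finType) (m n : nat) (W : I -> 'M[R]_(m, n)) : Prop :=
  forall x y : 'rV[R]_n,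
    (forall i, vnorm (x *m orth_proj (W i)) = vnorm (y *m orth_proj (W i))) ->
    x = y \/ x = - y.
End PR.

From HB Require Import structures.
From mathcomp Require Import all_boot all_order all_algebra.
From mathcomp Require Import reals.
From mathcomp.algebra_tactics Require Import ring lra.
From mathcomp.zify Require Import zify.
Import Order.TTheory GRing.Theory Num.Theory.
Local Open Scope ring_scope.
Set Implicit Arguments.
Unset Strict Implicit.
Unset Printing Implicit Defensive.

(* Take W_i = n_i^perp.  Since |P_i x|^2 = |x|^2 - <x, n_i>^2 / |n_i|^2, writing
   u = x - y and v = x + y, the hyperplanes identify x and y exactly when
   <u, n_i> <v, n_i> = |n_i|^2 <u, v> for all i, whereas the lines spanned by
   the n_i only see <u, n_i> <v, n_i> = 0.  The latter has the nonzero solution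
   u = (0, 2, 0, -8), v = (4, 2, 16, 8).  For the former, the normals come in
   pairs (lambda e, +-e) with e in R^2, and we split u = (a, b), v = (p, q) in
   R^2 x R^2.  Subtracting the two equations of each pair forces the symmetric
   tensor a q + q a + b p + p b to vanish, which makes b or p parallel to a;
   adding them then leaves, in each case, a small system whose only solutions
   have u = 0 or v = 0. *)

Section InnerProduct.
Variables (R : rcfType) (k : nat).
Implicit Types x y z : 'rV[R]_k.

Definition dotv x y : R := (x *m y^T) 0 0.

Lemma dotv_scalar_mx x y : x *m y^T = (dotv x y)%:M.
Proof. exact: mx11_scalar. Qed.

Lemma dotvC x y : dotv x y = dotv y x.
Proof. by rewrite /dotv -[in RHS](trmxK y) -trmx_mul [RHS]mxE. Qed.

Lemma dotvDl x y z : dotv (x + y) z = dotv x z + dotv y z.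
Proof. by rewrite /dotv mulmxDl mxE. Qed.

Lemma dotvBl x y z : dotv (x - y) z = dotv x z - dotv y z.
Proof. by rewrite /dotv mulmxBl !mxE. Qed.

Lemma dotvZl a x y : dotv (a *: x) y = a * dotv x y.
Proof. by rewrite /dotv -scalemxAl !mxE. Qed.

Lemma dotvDr x y z : dotv x (y + z) = dotv x y + dotv x z.
Proof. by rewrite ![dotv x _]dotvC dotvDl. Qed.

Lemma dotvBr x y z : dotv x (y - z) = dotv x y - dotv x z.
Proof. by rewrite ![dotv x _]dotvC dotvBl. Qed.

Lemma dotvZr a x y : dotv x (a *: y) = a * dotv x y.
Proof. by rewrite ![dotv x _]dotvC dotvZl. Qed.

Lemma dotvvE x : dotv x x = \sum_i x 0 i ^+ 2.
Proof. by rewrite /dotv mxE; apply: eq_bigr => i _; rewrite mxE. Qed.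

Lemma dotvv_ge0 x : 0 <= dotv x x.
Proof. by rewrite dotvvE sumr_ge0 // => i _; rewrite sqr_ge0. Qed.

Lemma dotvv_eq0 x : (dotv x x == 0) = (x == 0).
Proof.
apply/eqP/eqP => [|->]; last by rewrite dotvvE big1 // => i _; rewrite mxE expr0n.
rewrite dotvvE => /psumr_eq0P x0; apply/rowP => i; rewrite mxE.
by apply/eqP; rewrite -sqrf_eq0 x0 // => j _; rewrite sqr_ge0.
Qed.

Lemma dotvv_gt0 x : x != 0 -> 0 < dotv x x.
Proof. by move=> x0; rewrite lt_def dotvv_eq0 x0 dotvv_ge0. Qed.

Lemma vnormE x : vnorm x = Num.sqrt (dotv x x).
Proof. by rewrite dotvvE. Qed.

Lemma row_free_gram_unit m (B : 'M[R]_(m, k)) : row_free B -> B *m B^T \in unitmx.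
Proof.
move=> freeB; rewrite -row_free_unit -kermx_eq0; apply/eqP/row_matrixP => i.
rewrite row0; set r := row i _.
have rBB : r *m (B *m B^T) = 0 by rewrite -row_mul mulmx_ker row0.
have rB : r *m B = 0.
  apply/eqP; rewrite -dotvv_eq0 /dotv trmx_mul mulmxA -(mulmxA r) rBB.
  by rewrite mul0mx mxE.
by apply: (row_free_inj freeB); rewrite rB mul0mx.
Qed.

Lemma orth_proj_decomp m (W : 'M[R]_(m, k)) x y :
  (x <= W)%MS -> y *m W^T = 0 -> (x + y) *m orth_proj W = x.
Proof.
rewrite /orth_proj -(eq_row_base W) => xB yW.
have /submxP[C defB] : (row_base W <= W)%MS by rewrite eq_row_base.
have yB : y *m (row_base W)^T = 0 by rewrite defB trmx_mul mulmxA yW mul0mx.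
have BBu := row_free_gram_unit (row_base_free W).
have [u ->] := submxP xB.
move: (row_base W) yB BBu => B yB BBu.
by rewrite mulmxDl !mulmxA yB !mul0mx addr0 -(mulmxA u) mulmxK.
Qed.

Section Hyperplane.
Variable n : 'rV[R]_k.
Hypothesis n0 : n != 0.

(* Its rows |n|^2 e_i - n_i n span the hyperplane orthogonal to n. *)
Definition hyperplane : 'M[R]_k := (dotv n n)%:M - n^T *m n.

Lemma hyperplane_tr : hyperplane^T = hyperplane.
Proof. by rewrite linearB /= tr_scalar_mx trmx_mul trmxK. Qed.

Lemma mul_hyperplane x : x *m hyperplane = dotv n n *: x - dotv x n *: n.
Proof.
by rewrite mulmxBr mul_mx_scalar mulmxA dotv_scalar_mx mul_scalar_mx.
Qed.

Lemma hyperplane_normal : n *m hyperplane = 0.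
Proof. by rewrite mul_hyperplane subrr. Qed.

Lemma dotvv_neq0 : dotv n n != 0.
Proof. by rewrite gt_eqF ?dotvv_gt0. Qed.

Lemma sub_proj_normal x :
  x - (dotv x n / dotv n n) *: n = (dotv n n)^-1 *: (x *m hyperplane).
Proof.
by rewrite mul_hyperplane scalerBr !scalerA mulVf ?dotvv_neq0 // scale1r mulrC.
Qed.

Lemma kermx_hyperplane : (kermx hyperplane :=: n)%MS.
Proof.
have nK : (n <= kermx hyperplane)%MS by apply/sub_kermxP; exact: hyperplane_normal.
apply/eqmxP; rewrite nK andbT.
have /eqP := mulmx_ker hyperplane.
rewrite mulmxBr mul_mx_scalar mulmxA subr_eq0 => /eqP/(congr1 (fun A => (dotv n n)^-1 *: A)).
rewrite scalerA mulVf ?dotvv_neq0 // scale1r => ->.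
by rewrite scalemx_sub // submxMl.
Qed.

Lemma rank_hyperplane : \rank hyperplane = k.-1.
Proof.
have := mxrank_ker hyperplane; rewrite kermx_hyperplane rank_rV n0.
by have := rank_leq_row hyperplane; lia.
Qed.

Lemma rank_orth_compl_hyperplane : \rank (orth_compl hyperplane) = 1%N.
Proof. by rewrite /orth_compl hyperplane_tr kermx_hyperplane rank_rV n0. Qed.

Lemma proj_hyperplane x :
  x *m orth_proj hyperplane = x - (dotv x n / dotv n n) *: n.
Proof.
rewrite -{1}(subrK ((dotv x n / dotv n n) *: n) x) orth_proj_decomp //.
  by rewrite sub_proj_normal scalemx_sub // submxMl.
by rewrite hyperplane_tr -scalemxAl hyperplane_normal scaler0.
Qed.

Lemma proj_orth_compl_hyperplane x :
  x *m orth_proj (orth_compl hyperplane) = (dotv x n / dotv n n) *: n.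
Proof.
rewrite /orth_compl hyperplane_tr.
rewrite -{1}(addrNK ((dotv x n / dotv n n) *: n) x) addrC orth_proj_decomp //.
  by rewrite scalemx_sub // kermx_hyperplane.
rewrite sub_proj_normal -scalemxAl -mulmxA.
have /(congr1 trmx) := mulmx_ker hyperplane.
by rewrite trmx_mul hyperplane_tr trmx0 => ->; rewrite mulmx0 scaler0.
Qed.

End Hyperplane.

Lemma dotv_proj_hyperplane n x : n != 0 ->
  dotv (x *m orth_proj (hyperplane n)) (x *m orth_proj (hyperplane n)) =
  dotv x x - dotv x n ^+ 2 / dotv n n.
Proof.
move=> n0; have := dotvv_neq0 n0.
rewrite proj_hyperplane // dotvBl !dotvBr !dotvZl !dotvZr (dotvC n x).
by move=> N0; field.
Qed.

Lemma hyperplanes_phase_retrieval (I : finType) (n : I -> 'rV[R]_k) :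
  (forall i, n i != 0) ->
  (forall u v, (forall i, dotv u (n i) * dotv v (n i) = dotv (n i) (n i) * dotv u v) ->
     u = 0 \/ v = 0) ->
  does_phase_retrieval (fun i => hyperplane (n i)).
Proof.
move=> n0 trivial_sol x y eq_norm.
have [] := trivial_sol (x - y) (x + y).
- move=> i; have := congr1 (fun r => r ^+ 2 * dotv (n i) (n i)) (eq_norm i).
  rewrite /= !vnormE !sqr_sqrtr ?dotvv_ge0 // !dotv_proj_hyperplane //.
  rewrite !mulrBl !divfK ?dotvv_neq0 // !dotvBl !dotvDl !dotvDr (dotvC y x).
  by move=> h; lra.
- by move/eqP; rewrite subr_eq0 => /eqP; left.
- by move/eqP; rewrite addr_eq0 => /eqP; right.
Qed.

Lemma orth_compl_hyperplanes_not_phase_retrieval (I : finType) (n : I -> 'rV[R]_k) x y :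
  (forall i, n i != 0) -> (forall i, dotv x (n i) ^+ 2 = dotv y (n i) ^+ 2) ->
  x != y -> x != - y ->
  ~ does_phase_retrieval (fun i => orth_compl (hyperplane (n i))).
Proof.
move=> n0 eq_dot /eqP xy /eqP xNy /(_ x y) [i|//|//].
rewrite !proj_orth_compl_hyperplane // !vnormE !dotvZl !dotvZr !(mulrA (_ / _) (_ / _)).
by rewrite -!expr2 !expr_div_n eq_dot.
Qed.

End InnerProduct.

Section PlaneAlgebra.
Variable R : realFieldType.

Lemma sym_prod_eq0 (x1 x2 y1 y2 : R) :
  x1 * y1 = 0 -> x2 * y2 = 0 -> x1 * y2 + x2 * y1 = 0 ->
  (x1 = 0 /\ x2 = 0) \/ (y1 = 0 /\ y2 = 0).
Proof.
move=> /eqP; rewrite mulf_eq0 => /orP[]/eqP-> /eqP; rewrite mulf_eq0 => /orP[]/eqP->.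
- by left.
- by rewrite mul0r add0r => /eqP; rewrite mulf_eq0 => /orP[]/eqP->; [left|right].
- by rewrite mulr0 addr0 => /eqP; rewrite mulf_eq0 => /orP[]/eqP->; [left|right].
- by right.
Qed.

(* The sums of the pair equations for u = (a, b) and v = r (a, -b), divided by r. *)
Lemma opposite_blocks_eq0 (a1 a2 b1 b2 : R) (c := a1 ^+ 2 + a2 ^+ 2 - b1 ^+ 2 - b2 ^+ 2) :
  a1 ^+ 2 - 9 * b1 ^+ 2 = 10 * c ->
  16 * (-2 * a1 + 3 * a2) ^+ 2 - (-2 * b1 + 3 * b2) ^+ 2 = 221 * c ->
  4 * (- a1 + 2 * a2) ^+ 2 - (- b1 + 2 * b2) ^+ 2 = 25 * c ->
  a1 = 0 /\ a2 = 0.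
Proof.
move=> E1 E2 E3.
have Q0 : 41 * a1 ^+ 2 - 96 * a1 * a2 + 57 * a2 ^+ 2 + 65 * b1 ^+ 2 - 12 * b1 * b2 + 6 * b2 ^+ 2 = 0.
  rewrite /c in E1 E2 E3; lra.
have := sqr_ge0 (41 * a1 - 48 * a2); have := sqr_ge0 (65 * b1 - 6 * b2).
have := sqr_ge0 a2; have := sqr_ge0 b2 => *.
have a2_0 : a2 ^+ 2 = 0 by nra.
split; nra.
Qed.

(* The sums of the pair equations for u = (a, r a) and v = (p, -r p), with t = r^2
   and x1, x2, x3 the entries a1 p1, a2 p2, a1 p2 + a2 p1 of a p + p a. *)
Lemma proportional_blocks_eq0 (t x1 x2 x3 : R) : 0 <= t ->
  (1 - 9 * t) * x1 = 10 * (1 - t) * (x1 + x2) ->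
  (16 - t) * (4 * x1 + 9 * x2 - 6 * x3) = 221 * (1 - t) * (x1 + x2) ->
  (4 - t) * (x1 + 4 * x2 - 2 * x3) = 25 * (1 - t) * (x1 + x2) ->
  [/\ x1 = 0, x2 = 0 & x3 = 0].
Proof.
move=> t_ge0 /eqP; rewrite -subr_eq0 => /eqP E1 /eqP; rewrite -subr_eq0 => /eqP E2.
move=> /eqP; rewrite -subr_eq0 => /eqP E3.
(* D is the determinant of this linear system in x; the cofactors below express
   each D * x_j as a combination of the equations. *)
set D := -5368 + 9172 * t - 3362 * t ^+ 2 - 2602 * t ^+ 3.
have D_neq0 : D != 0.
  have D16 : 16 * D = - (2602 * (t * (4 * t - 3) ^+ 2) + 7265 * (4 * t - 3) ^+ 2 + 4190 * t + 20503).
    by rewrite /D; ring.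
  have := mulr_ge0 t_ge0 (sqr_ge0 (4 * t - 3)); have := sqr_ge0 (4 * t - 3).
  by move=> *; rewrite lt_eqF //; lra.
pose e1 := (1 - 9 * t) * x1 - 10 * (1 - t) * (x1 + x2).
pose e2 := (16 - t) * (4 * x1 + 9 * x2 - 6 * x3) - 221 * (1 - t) * (x1 + x2).
pose e3 := (4 - t) * (x1 + 4 * x2 - 2 * x3) - 25 * (1 - t) * (x1 + x2).
have cramer x c1 c2 c3 : D * x = c1 * e1 + c2 * e2 + c3 * e3 -> x = 0.
  rewrite /e1 /e2 /e3 E1 E2 E3 !mulr0 !addr0 => /eqP.
  by rewrite mulf_eq0 (negPf D_neq0) => /eqP.
split.
- apply: (cramer _ (-248 + 220 * t + 298 * t ^+ 2) (-80 + 100 * t - 20 * t ^+ 2)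
    (960 - 1020 * t + 60 * t ^+ 2)); rewrite /D /e1 /e2 /e3; ring.
- apply: (cramer _ (760 - 380 * t - 290 * t ^+ 2) (72 - 26 * t + 2 * t ^+ 2)
    (-864 + 150 * t - 6 * t ^+ 2)); rewrite /D /e1 /e2 /e3; ring.
- apply: (cramer _ (-204 + 1050 * t - 531 * t ^+ 2) (129 - 252 * t + 219 * t ^+ 2)
    (-877 + 1755 * t - 1958 * t ^+ 2)); rewrite /D /e1 /e2 /e3; ring.
Qed.

Lemma dependent2 (a1 a2 p1 p2 : R) :
  ~ (a1 = 0 /\ a2 = 0) -> a1 * p2 = a2 * p1 ->
  exists r, p1 = r * a1 /\ p2 = r * a2.
Proof.
move=> a_neq0 det0; have [a1_0|a1_neq0] := eqVneq a1 0.
  have a2_neq0 : a2 != 0 by apply/eqP => a2_0; apply: a_neq0.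
  exists (p2 / a2); rewrite divfK // a1_0 mulr0; split=> //.
  by move/eqP: det0; rewrite a1_0 mul0r eq_sym mulf_eq0 (negPf a2_neq0) => /eqP.
exists (p1 / a1); rewrite divfK //; split=> //.
by rewrite mulrAC [p1 * a2]mulrC -det0 mulrC mulKf.
Qed.

(* Evaluate a q + q a + b p + p b at (-a2, a1), which is orthogonal to a. *)
Lemma sym_tensor_eq0_det (a1 a2 b1 b2 p1 p2 q1 q2 : R) :
  a1 * q1 + b1 * p1 = 0 ->
  a2 * q2 + b2 * p2 = 0 ->
  a1 * q2 + a2 * q1 + b1 * p2 + b2 * p1 = 0 ->
  (a1 * b2 - a2 * b1) * (a1 * p2 - a2 * p1) = 0.
Proof.
move=> T1 T2 T3; have -> : (a1 * b2 - a2 * b1) * (a1 * p2 - a2 * p1) =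
    a2 ^+ 2 * (a1 * q1 + b1 * p1) + a1 ^+ 2 * (a2 * q2 + b2 * p2) -
    a1 * a2 * (a1 * q2 + a2 * q1 + b1 * p2 + b2 * p1) by ring.
by rewrite T1 T2 T3 !mulr0 subr0 addr0.
Qed.

(* u = (a1, a2, b1, b2), v = (p1, p2, q1, q2): the first three hypotheses say
   that a q + q a + b p + p b = 0, the last three are the sums of pair equations. *)
Lemma block_system_trivial (a1 a2 b1 b2 p1 p2 q1 q2 : R)
    (c := a1 * p1 + a2 * p2 + b1 * q1 + b2 * q2) :
  a1 * q1 + b1 * p1 = 0 ->
  a2 * q2 + b2 * p2 = 0 ->
  a1 * q2 + a2 * q1 + b1 * p2 + b2 * p1 = 0 ->
  a1 * p1 + 9 * (b1 * q1) = 10 * c ->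
  16 * ((-2 * a1 + 3 * a2) * (-2 * p1 + 3 * p2)) + (-2 * b1 + 3 * b2) * (-2 * q1 + 3 * q2) = 221 * c ->
  4 * ((- a1 + 2 * a2) * (- p1 + 2 * p2)) + (- b1 + 2 * b2) * (- q1 + 2 * q2) = 25 * c ->
  [/\ a1 = 0, a2 = 0, b1 = 0 & b2 = 0] \/ [/\ p1 = 0, p2 = 0, q1 = 0 & q2 = 0].
Proof.
rewrite /c => T1 T2 T3 S1 S2 S3.
have [/andP[/eqP a1_0 /eqP a2_0]|a_neq0] := boolP ((a1 == 0) && (a2 == 0)).
  subst a1 a2.
  have : (b1 = 0 /\ b2 = 0) \/ (p1 = 0 /\ p2 = 0) by apply: sym_prod_eq0; lra.
  case=> [[-> ->]|[p1_0 p2_0]]; first by left.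
  subst p1 p2.
  have : (b1 = 0 /\ b2 = 0) \/ (q1 = 0 /\ q2 = 0) by apply: sym_prod_eq0; lra.
  by case=> [[-> ->]|[-> ->]]; [left | right].
have {}a_neq0 : ~ (a1 = 0 /\ a2 = 0).
  by case=> a1_0 a2_0; move: a_neq0; rewrite a1_0 a2_0 eqxx.
move/eqP: (sym_tensor_eq0_det T1 T2 T3); rewrite mulf_eq0 => /orP[/eqP ab_dep|/eqP ap_dep].
- have [r [hb1 hb2]] : exists r, b1 = r * a1 /\ b2 = r * a2.
    by apply: dependent2 => //; lra.
  subst b1 b2.
  have [/a_neq0[]|[hq1 hq2]] : (a1 = 0 /\ a2 = 0) \/ (q1 + r * p1 = 0 /\ q2 + r * p2 = 0).
    by apply: sym_prod_eq0; lra.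
  have [eq1 eq2] : q1 = - r * p1 /\ q2 = - r * p2 by split; lra.
  subst q1 q2.
  have [ap1 ap2 ap3] : [/\ a1 * p1 = 0, a2 * p2 = 0 & a1 * p2 + a2 * p1 = 0].
    by apply: (proportional_blocks_eq0 (sqr_ge0 r)); lra.
  have [/a_neq0[]|[-> ->]] := sym_prod_eq0 ap1 ap2 ap3.
  by right; rewrite !mulr0.
- have [r [hp1 hp2]] : exists r, p1 = r * a1 /\ p2 = r * a2.
    by apply: dependent2 => //; lra.
  subst p1 p2.
  have [/a_neq0[]|[hq1 hq2]] : (a1 = 0 /\ a2 = 0) \/ (q1 + r * b1 = 0 /\ q2 + r * b2 = 0).
    by apply: sym_prod_eq0; lra.
  have [eq1 eq2] : q1 = - r * b1 /\ q2 = - r * b2 by split; lra.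
  subst q1 q2.
  have [->|r_neq0] := eqVneq r 0; first by right; rewrite !mul0r oppr0 !mul0r.
  exfalso; apply: a_neq0; apply: (opposite_blocks_eq0 (b1 := b1) (b2 := b2)).
  all: by apply: (mulfI r_neq0); lra.
Qed.

End PlaneAlgebra.

Section Example.
Variable R : rcfType.

Definition vec4 (a b c d : R) : 'rV[R]_4 := \row_j [:: a; b; c; d]`_j.

Lemma vec4P (x : 'rV[R]_4) : exists a b c d, x = vec4 a b c d.
Proof.
exists (x 0 (inord 0)), (x 0 (inord 1)), (x 0 (inord 2)), (x 0 (inord 3)).
apply/rowP => -[[|[|[|[|//]]]] j4]; rewrite mxE /=; congr (x 0 _);
  by apply: val_inj; rewrite /= inordK.
Qed.

Lemma dotv_vec4 (a b c d a' b' c' d' : R) :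
  dotv (vec4 a b c d) (vec4 a' b' c' d') = a * a' + b * b' + c * c' + d * d'.
Proof. by rewrite /dotv mxE !big_ord_recr big_ord0 !mxE /= add0r. Qed.

Lemma vec4_eq0 (a b c d : R) :
  (vec4 a b c d == 0) = [&& a == 0, b == 0, c == 0 & d == 0].
Proof.
apply/eqP/and4P => [/rowP v0 | [/eqP-> /eqP-> /eqP-> /eqP->]].
  by split; apply/eqP; [move: (v0 0) | move: (v0 1) | move: (v0 2%:R) | move: (v0 3%:R)];
    rewrite !mxE.
by apply/rowP => -[[|[|[|[|//]]]] j4]; rewrite !mxE.
Qed.

(* Pairs of normals (lambda e, +-e) for (lambda, e) = (1/3, (3, 0)), (4, (-2, 3))
   and (2, (-1, 2)). *)
Definition normal (i : 'I_6) : 'rV[R]_4 :=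
  nth 0 [:: vec4 1 0 3 0; vec4 1 0 (-3) 0; vec4 (-8) 12 (-2) 3; vec4 (-8) 12 2 (-3);
            vec4 (-2) 4 (-1) 2; vec4 (-2) 4 1 (-2)] i.

Lemma normal_neq0 i : normal i != 0.
Proof.
apply/negP; case: i => [[|[|[|[|[|[|//]]]]]] i6];
  by rewrite /normal /= vec4_eq0 => /and4P[/eqP c0 _ _ _]; lra.
Qed.

Lemma normals_trivial_sol (u v : 'rV[R]_4) :
  (forall i, dotv u (normal i) * dotv v (normal i) = dotv (normal i) (normal i) * dotv u v) ->
  u = 0 \/ v = 0.
Proof.
have [a1 [a2 [b1 [b2 ->]]]] := vec4P u; have [p1 [p2 [q1 [q2 ->]]]] := vec4P v.
move=> eqs; have E k (k6 : (k < 6)%N) := eqs (Ordinal k6).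
move: (E 0%N isT) (E 1%N isT) (E 2%N isT) (E 3%N isT) (E 4%N isT) (E 5%N isT).
rewrite /normal /= !dotv_vec4 => E0 E1 E2 E3 E4 E5.
have [[-> -> -> ->]|[-> -> -> ->]] :
    [/\ a1 = 0, a2 = 0, b1 = 0 & b2 = 0] \/ [/\ p1 = 0, p2 = 0, q1 = 0 & q2 = 0].
  by apply: block_system_trivial; lra.
- by left; apply/eqP; rewrite vec4_eq0 !eqxx.
- by right; apply/eqP; rewrite vec4_eq0 !eqxx.
Qed.

(* x - y is orthogonal to the first three normals and x + y to the last three. *)
Lemma normal_lines_collision i :
  dotv (vec4 2 2 8 0) (normal i) ^+ 2 = dotv (vec4 2 0 8 8) (normal i) ^+ 2.
Proof. by case: i => [[|[|[|[|[|[|//]]]]]] i6]; rewrite /normal /= !dotv_vec4; ring. Qed.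

End Example.

Theorem mainTheorem9 (R : realType) :
  exists W : 'I_6 -> 'M[R]_4,
    (forall i, \rank (W i) = 3%N) /\
    (forall i, \rank (orth_compl (W i)) = 1%N) /\
    does_phase_retrieval W /\
    ~ does_phase_retrieval (fun i => orth_compl (W i)).
Proof.
exists (fun i => hyperplane (normal R i)); split; [|split; [|split]].
- by move=> i; rewrite rank_hyperplane ?normal_neq0.
- by move=> i; rewrite rank_orth_compl_hyperplane ?normal_neq0.
- exact: hyperplanes_phase_retrieval (@normal_neq0 R) (@normals_trivial_sol R).
- apply: orth_compl_hyperplanes_not_phase_retrieval (@normal_neq0 R)
    (@normal_lines_collision R) _ _;
    by apply/eqP => /rowP/(_ (inord 1)); rewrite !mxE inordK //=; lra.
Qed.
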